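(* Let $m\ge 1$ be an odd integer divisible by $3$. Then for every $n\in\mathbb{N}=\mathbb{Z}_{\ge 0}$, the friendship graph $F_n$ is $\mathbb{Z}_m$-cordial.
   Context: Graphs are finite, simple and undirected. For $n\in\mathbb{N}$, the friendship graph $F_n$ is the union of $n$ copies of the triangle $C_3$ joined at a single common (central) vertex (so $F_0$ is a single vertex). For an abelian group $A$ and a graph $G=(V,E)$, a vertex labeling $\ell:V\to A$ induces an edge labeling $\ell(\{v_1,v_2\})=\ell(v_1)+\ell(v_2)$. Let $f_V(a)=|\{v\in V:\ell(v)=a\}|$ and $f_E(a)=|\{e\in E:\ell(e)=a\}|$. The labeling is $A$-cordial if $|f_V(a_1)-f_V(a_2)|\le 1$ and $|f_E(a_1)-f_E(a_2)|\le 1$ for all $a_1,a_2\in A$; $G$ is $A$-cordial if it admits an $A$-cordial labeling. *)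

From mathcomp Require Import all_boot all_order all_algebra.
Set Implicit Arguments. Unset Strict Implicit. Unset Printing Implicit Defensive.
Import GRing.Theory.

(* A simple graph: vertex finType V with a symmetric irreflexive relation. *)
Definition edges (V : finType) (adj : rel V) : {set {set V}} :=
  [set e : {set V} | [exists u : V, exists v : V, adj u v && (e == [set u; v])]].

Section Cordial.
Variables (A : finZmodType) (V : finType) (adj : rel V).

Definition fV (l : V -> A) (a : A) : nat := #|[set v : V | l v == a]|.

Definition fE (l : V -> A) (a : A) : nat :=
  #|[set e in edges adj | (\sum_(v in e) l v)%R == a]|.

Definition cordial_labeling (l : V -> A) : Prop :=
  forall a1 a2 : A,
    (fV l a1 <= (fV l a2).+1)%N /\ (fV l a2 <= (fV l a1).+1)%N /\
    (fE l a1 <= (fE l a2).+1)%N /\ (fE l a2 <= (fE l a1).+1)%N.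

Definition is_cordial : Prop := exists l : V -> A, cordial_labeling l.
End Cordial.

(* Friendship graph F_n on vertices 0..2n: 0 is the centre, triangle i      *)
(* (i < n) is {0, 2i+1, 2i+2}.                                              *)
Definition friendship_adj (n : nat) : rel 'I_(n.*2.+1) :=
  fun u v => (u != v) &&
    [|| (val u == 0)%N, (val v == 0)%N |
        [&& (0 < val u)%N, (0 < val v)%N & ((val u).-1./2 == (val v).-1./2)%N]].

Arguments friendship_adj n : clear implicits.

Lemma friendship_adj_sym (n : nat) : symmetric (friendship_adj n).
Proof.
move=> u v; rewrite /friendship_adj eq_sym; congr (_ && _).
by case: (val u == 0)%N; case: (val v == 0)%N => //=; rewrite andbCA eq_sym.
Qed.

Lemma friendship_adj_irrefl (n : nat) : irreflexive (friendship_adj n).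
Proof. by move=> u; rewrite /friendship_adj eqxx. Qed.

From mathcomp Require Import all_boot all_order all_algebra.
From mathcomp Require Import zify.
Set Implicit Arguments. Unset Strict Implicit. Unset Printing Implicit Defensive.
Import GRing.Theory.

(** Write m = 3t with t odd and n = Q m + r with r < m.  Q blocks of m
    triangles labelled (x, x), x running through a complete residue system,
    hit every residue equally often, among vertices as well as among edges
    (doubling is a bijection modulo the odd m).  For the remaining r = 2q + p
    triangles (q <= p <= q + 2) all labels are written 3h + e: the residue of
    3h + e modulo 3t is determined by e < 3 and by h modulo t, so the labeling
    is cordial once in each class e the values h are equidistributed modulo t
    and the class sizes differ by at most one.  We take p triangles
    (3h + 1, 3h + 2) with h in an interval, and q triangles each of the shapes
    (3g, 3h + 1) and (3g, 3h + 2) arranged as "ladders": their values h extend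
    that interval on both sides, and the sums g + h extend it further.  The
    values g, which share class 0 with the centre's label 0, are the numbers
    2w + 1 for w in an interval missing the residue of (t - 1)/2 (the one sent
    to 0), together with either nothing or a complete residue system. *)

(** * Friendship graphs labelled triangle by triangle *)

(** A list [T] of pairs [(x_i, y_i)] stands for the labeling of the friendship
    graph on [size T] triangles with centre label 0 and leaf labels [x_i, y_i]. *)
Section TriangleLabels.
Variable M : nmodType.

Definition pair_sums (T : seq (M * M)) : seq M := [seq (p.1 + p.2)%R | p <- T].

Definition vertex_labels (T : seq (M * M)) : seq M := 0%R :: unzip1 T ++ unzip2 T.

Definition edge_labels (T : seq (M * M)) : seq M := unzip1 T ++ unzip2 T ++ pair_sums T.

Lemma perm_vertex_labels_cat (T1 T2 : seq (M * M)) :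
  perm_eq (vertex_labels (T1 ++ T2)) ((unzip1 T1 ++ unzip2 T1) ++ vertex_labels T2).
Proof.
rewrite /vertex_labels /unzip1 /unzip2 !map_cat.
by apply/permP => P; rewrite /= !count_cat /= count_cat; lia.
Qed.

Lemma perm_edge_labels_cat (T1 T2 : seq (M * M)) :
  perm_eq (edge_labels (T1 ++ T2)) (edge_labels T1 ++ edge_labels T2).
Proof.
rewrite /edge_labels /unzip1 /unzip2 /pair_sums !map_cat.
by apply/permP => P; rewrite /= !count_cat; lia.
Qed.

End TriangleLabels.

Definition balanced (A : eqType) (s : seq A) :=
  forall a b : A, count_mem a s <= (count_mem b s).+1.

Lemma card_ord_count_mem (U : eqType) N (f : nat -> U) a :
  #|[set i : 'I_N | f i == a]| = count_mem a (map f (iota 0 N)).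
Proof.
rewrite count_map -sum1dep_card -(big_mkord (fun i => f i == a) (fun _ => 1)).
by rewrite sum1_count /index_iota subn0.
Qed.

Lemma count_flatten_pair (S U : Type) (f g : S -> U) (P : pred U) s :
  count P (flatten [seq [:: f i; g i] | i <- s]) = count P (map f s) + count P (map g s).
Proof. by elim: s => //= i s ->; lia. Qed.

Section FriendshipLabeling.
Variables (A : finZmodType) (T : seq (A * A)).
Local Notation n := (size T).
Local Notation V := 'I_(n.*2.+1).
Local Notation x i := (nth (0, 0)%R T i).1.
Local Notation y i := (nth (0, 0)%R T i).2.

Definition friendship_labeling (k : nat) : A :=
  if k is k'.+1 then (if odd k' then y k'./2 else x k'./2) else 0%R.

Lemma map_friendship_labeling_leaves j k :
  map friendship_labeling (iota (j.*2).+1 k.*2) =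
  flatten [seq [:: x i; y i] | i <- iota j k].
Proof.
elim: k j => [|k IHk] j //=.
by rewrite odd_double doubleK uphalf_double -IHk doubleS.
Qed.

Lemma map_nth_iota_size (U : Type) (f : A * A -> U) :
  [seq f (nth (0, 0)%R T i) | i <- iota 0 n] = map f T.
Proof. by rewrite -[in RHS](mkseq_nth (0, 0)%R T) /mkseq -map_comp. Qed.

Lemma fV_friendship_labeling a :
  fV (fun v : V => friendship_labeling v) a = count_mem a (vertex_labels T).
Proof.
rewrite /fV (card_ord_count_mem _ friendship_labeling) /= -[1]/(0.*2).+1.
rewrite map_friendship_labeling_leaves count_flatten_pair.
by rewrite !(map_nth_iota_size (fun p => p.1)) !(map_nth_iota_size (fun p => p.2)) count_cat.
Qed.

(** [(i, 0)] and [(i, 1)] are the spokes from the centre to [2i+1] and [2i+2],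
    [(i, 2)] is the rim edge [{2i+1, 2i+2}]. *)
Definition edge_lo (e : 'I_n * 'I_3) : nat := if val e.2 == 2 then (e.1.*2).+1 else 0.
Definition edge_hi (e : 'I_n * 'I_3) : nat := (e.1.*2 + (val e.2 != 0)).+1.

Definition friendship_edge (e : 'I_n * 'I_3) : {set V} :=
  [set inord (edge_lo e); inord (edge_hi e)].

Lemma edge_lo_lt_hi e : edge_lo e < edge_hi e.
Proof. by case: e => i [[|[|[|//]]] ?]; rewrite /edge_lo /edge_hi /= -!mul2n; lia. Qed.

Lemma edge_hi_le e : edge_hi e <= n.*2.
Proof.
by case: e => [[i lt_in] k]; rewrite /edge_hi /= -!mul2n; case: (val k != 0); lia.
Qed.

Lemma mem_friendship_edge e (w : V) :
  (w \in friendship_edge e) = (val w == edge_lo e) || (val w == edge_hi e).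
Proof.
have hi_le := edge_hi_le e; have lo_le := ltnW (leq_trans (edge_lo_lt_hi e) hi_le).
by rewrite !inE -!val_eqE /= !inordK.
Qed.

Lemma friendship_adj_lt_edge a b :
  a < b <= n.*2 -> (a == 0) || (0 < a) && ((a.-1)./2 == (b.-1)./2) ->
  exists e, a = edge_lo e /\ b = edge_hi e.
Proof.
move=> /andP [lt_ab le_bn] adj_ab.
have b_split := odd_double_half b.-1; set j := (b.-1)./2 in adj_ab b_split.
have lt_jn : j < n by move: b_split le_bn; rewrite -!mul2n; lia.
case/orP: adj_ab => [/eqP a0 | /andP [a_gt0 /eqP a_half]].
  exists (Ordinal lt_jn, inord (odd b.-1)).
  by rewrite /edge_lo /edge_hi /= inordK; case: (odd b.-1) b_split => /= b_split; lia.
have := odd_double_half a.-1; rewrite a_half => a_split.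
exists (Ordinal lt_jn, inord 2); rewrite /edge_lo /edge_hi /= inordK //.
by case: (odd a.-1) a_split; case: (odd b.-1) b_split => /=; lia.
Qed.

Lemma edges_friendship : edges (friendship_adj n) = friendship_edge @: setT.
Proof.
apply/setP => E; rewrite inE; apply/existsP/imsetP => [[u /existsP [v]] | [e _ ->]].
  case/andP=> adj_uv /eqP ->.
  wlog lt_uv : u v adj_uv / val u < val v.
    move=> W; case: (ltngtP (val u) (val v)) => [|gt_uv|/val_inj eq_uv]; first exact: W.
      by rewrite setUC; apply: W; rewrite // friendship_adj_sym.
    by move: adj_uv; rewrite eq_uv friendship_adj_irrefl.
  have uv_range : val u < val v <= n.*2 by rewrite lt_uv -ltnS ltn_ord.
  have uv_tri : (val u == 0) || (0 < val u) && ((val u).-1./2 == (val v).-1./2).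
    case/andP: adj_uv => _ /or3P [-> // | /eqP v0 | /and3P [-> _ ->]]; last by rewrite orbT.
    by rewrite v0 in lt_uv.
  have [e [lo_u hi_v]] := friendship_adj_lt_edge uv_range uv_tri.
  by exists e => //; apply/setP => w; rewrite mem_friendship_edge !inE -!val_eqE lo_u hi_v.
exists (inord (edge_lo e)); apply/existsP; exists (inord (edge_hi e)).
have hi_le := edge_hi_le e; have lo_lt := edge_lo_lt_hi e.
rewrite eqxx andbT /friendship_adj -val_eqE /= !inordK ?ltnS ?(ltnW (leq_trans lo_lt hi_le)) //.
case: e {lo_lt hi_le} => i [[|[|[|//]]] ?] //=.
rewrite /edge_lo /edge_hi /= addn1 /= doubleK uphalf_double.
by rewrite eqxx andbT; lia.
Qed.

Lemma edge_ends_inj e1 e2 : edge_lo e1 = edge_lo e2 -> edge_hi e1 = edge_hi e2 -> e1 = e2.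
Proof.
case: e1 e2 => [i1 [[|[|[|//]]] ?]] [i2 [[|[|[|//]]] ?]]; rewrite /edge_lo /edge_hi /= -!mul2n.
all: by move=> *; apply/eqP; rewrite xpair_eqE -!val_eqE /=; lia.
Qed.

Lemma friendship_edge_inj : injective friendship_edge.
Proof.
move=> e1 e2 eq_e12.
have same k : k <= n.*2 ->
    (k == edge_lo e1) || (k == edge_hi e1) = (k == edge_lo e2) || (k == edge_hi e2).
  by move=> le_kn; rewrite -(inordK (n' := n.*2) le_kn) -!mem_friendship_edge eq_e12.
have lt1 := edge_lo_lt_hi e1; have lt2 := edge_lo_lt_hi e2.
have le1 := edge_hi_le e1; have le2 := edge_hi_le e2.
have := same _ (ltnW (leq_trans lt1 le1)); have := same _ le1.
have := same _ (ltnW (leq_trans lt2 le2)); have := same _ le2.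
by rewrite !eqxx ?orbT => *; apply: edge_ends_inj; lia.
Qed.

Lemma sum_friendship_edge e :
  (\sum_(v in friendship_edge e) friendship_labeling v =
   friendship_labeling (edge_lo e) + friendship_labeling (edge_hi e))%R.
Proof.
have hi_le := edge_hi_le e; have lo_lt := edge_lo_lt_hi e.
have lo_le := ltnW (leq_trans lo_lt hi_le).
rewrite big_setU1 ?big_set1 /= ?inordK // inE -val_eqE /= !inordK //.
by rewrite ltn_eqF.
Qed.

Lemma friendship_edge_label i (k : 'I_3) :
  (friendship_labeling (edge_lo (i, k)) + friendship_labeling (edge_hi (i, k)) =
   nth 0 [:: x i; y i; x i + y i] k)%R.
Proof.
case: k => [[|[|[|//]]] ?]; rewrite /= ?addn0 ?addn1 /=.
all: by rewrite ?odd_double ?doubleK ?uphalf_double ?add0r.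
Qed.

Lemma count_mem_map_nth (U : eqType) (f : A * A -> U) a :
  count_mem a (map f T) = \sum_(i < n) (f (nth (0, 0)%R T i) == a).
Proof.
rewrite count_map -sum1_count big_mkcond (big_nth (0, 0)%R) big_mkord.
by apply: eq_bigr => i _ /=; case: (_ == a).
Qed.

Lemma fE_friendship_labeling a :
  fE (friendship_adj n) (fun v : V => friendship_labeling v) a = count_mem a (edge_labels T).
Proof.
rewrite /fE edges_friendship.
pose P (E : {set V}) := (\sum_(v in E) friendship_labeling v == a)%R.
have -> : [set E in friendship_edge @: setT | P E] =
          friendship_edge @: [set e | P (friendship_edge e)].
  apply/setP => E; rewrite inE; apply/andP/imsetP => [[/imsetP [e _ ->] Pe] | [e]].
    by exists e; rewrite ?inE.
  by rewrite inE => Pe ->; split; first exact: imset_f.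
rewrite (card_imset _ friendship_edge_inj).
rewrite -sum1dep_card big_mkcond /= -(pair_bigA _ (fun i k => (P (friendship_edge (i, k)) : nat))).
rewrite /edge_labels !count_cat !count_mem_map_nth -!big_split; apply: eq_bigr => i _.
by rewrite !big_ord_recl big_ord0 /P !sum_friendship_edge !friendship_edge_label /= addn0.
Qed.

Lemma cordial_friendship_labeling :
  balanced (vertex_labels T) -> balanced (edge_labels T) -> is_cordial A (friendship_adj n).
Proof.
move=> balV balE; exists (fun v : V => friendship_labeling v) => a1 a2.
by rewrite !fV_friendship_labeling !fE_friendship_labeling !balV !balE.
Qed.

End FriendshipLabeling.

(** * Counting residues *)

Definition count_mod t q (s : seq nat) := count (fun x => x %% t == q) s.

Lemma count_mod_cat t q s1 s2 : count_mod t q (s1 ++ s2) = count_mod t q s1 + count_mod t q s2.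
Proof. exact: count_cat. Qed.

Lemma count_mod_perm t q (s1 s2 : seq nat) : perm_eq s1 s2 -> count_mod t q s1 = count_mod t q s2.
Proof. by rewrite /count_mod => /permP ->. Qed.

Lemma count_mod_map_congr t q (f g : nat -> nat) s :
  {in s, forall x, f x = g x %[mod t]} -> count_mod t q (map f s) = count_mod t q (map g s).
Proof. by move=> fg; rewrite /count_mod !count_map; apply: eq_in_count => x /fg /= ->. Qed.

Lemma count_mod_iota_step t q x : 0 < t -> count_mod t q (iota x.+1 t) = count_mod t q (iota x t).
Proof.
move=> t_gt0.
have -> : iota x.+1 t = iota x.+1 t.-1 ++ [:: x + t].
  by rewrite -{1}(prednK t_gt0) -[t.-1.+1]addn1 iotaD addSnnS prednK.
have -> : iota x t = x :: iota x.+1 t.-1 by rewrite -{1}(prednK t_gt0).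
by rewrite count_mod_cat /count_mod /= modnDr addn0 addnC.
Qed.

Lemma count_mod_iota_period t q x : q < t -> count_mod t q (iota x t) = 1.
Proof.
move=> lt_qt; have t_gt0 : 0 < t by lia.
elim: x => [|x <-]; last by rewrite count_mod_iota_step.
rewrite /count_mod (eq_in_count (a2 := pred1 q)) => [|y].
  by rewrite count_uniq_mem ?iota_uniq // mem_iota lt_qt.
by rewrite mem_iota => /andP [_ /modn_small ->].
Qed.

Lemma count_mod_iota_le1 t q x N : N <= t -> q < t -> count_mod t q (iota x N) <= 1.
Proof.
move=> le_Nt lt_qt; rewrite -(count_mod_iota_period x lt_qt) -(subnKC le_Nt) iotaD.
by rewrite count_mod_cat leq_addr.
Qed.

(** Every residue modulo [t] occurs [N %/ t] or [(N + t.-1) %/ t] times in [s]. *)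
Definition equidistributed t N s :=
  forall q, q < t -> N < (count_mod t q s).+1 * t /\ count_mod t q s * t < N + t.

Lemma equidistributed_iota t x N : equidistributed t N (iota x N).
Proof.
move=> q lt_qt; elim/ltn_ind: N x => N IH x.
case: (ltnP N t) => [lt_Nt | le_tN].
  have := count_mod_iota_le1 x (ltnW lt_Nt) lt_qt.
  case: N lt_Nt {IH} => [|N] lt_Nt; first by rewrite /count_mod /=; lia.
  by case: (count_mod _ _ _) => [|[|]] //= _; lia.
have -> : iota x N = iota x t ++ iota (x + t) (N - t) by rewrite -iotaD subnKC.
have [] := IH (N - t) _ (x + t); first by lia.
by rewrite count_mod_cat count_mod_iota_period // add1n !mulSn; lia.
Qed.

Lemma equidistributed_count t N s1 s2 :
  (forall q, q < t -> count_mod t q s1 = count_mod t q s2) ->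
  equidistributed t N s2 -> equidistributed t N s1.
Proof. by move=> eq_count eq_s2 q lt_qt; rewrite eq_count //; apply: eq_s2. Qed.

Lemma equidistributed_perm t N (s1 s2 : seq nat) :
  perm_eq s1 s2 -> equidistributed t N s2 -> equidistributed t N s1.
Proof. by move=> s12; apply: equidistributed_count => q _; apply: count_mod_perm. Qed.

Lemma equidistributed_exact t Q s :
  equidistributed t (Q * t) s -> forall q, q < t -> count_mod t q s = Q.
Proof.
move=> eq_s q lt_qt; have [] := eq_s q lt_qt.
rewrite -mulSnr !ltn_pmul2r ?(leq_ltn_trans _ lt_qt) // => lt_Q lt_c.
by apply/eqP; rewrite eqn_leq -ltnS lt_c -ltnS lt_Q.
Qed.

Lemma equidistributed_cat_period t N s f :
  equidistributed t N s -> equidistributed t t f -> equidistributed t (N + t) (s ++ f).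
Proof.
move=> eq_s eq_f q lt_qt.
have f1 : count_mod t q f = 1 by apply: (equidistributed_exact (Q := 1)); rewrite ?mul1n.
by rewrite count_mod_cat f1 addn1; have [] := eq_s q lt_qt; rewrite !mulSnr; lia.
Qed.

Lemma eqn_mod_double t a b : odd t -> (2 * a == b %[mod t]) = (a == t.+1./2 * b %[mod t]).
Proof.
move=> t_odd; set h := t.+1./2; have half2 : 2 * h = t.+1.
  by rewrite -[in RHS](odd_double_half t.+1) /= t_odd mul2n.
have mulS_mod y : t.+1 * y = y %[mod t] by rewrite mulnC mulnS addnC modnMDl.
apply/eqP/eqP => eq_ab.
  by rewrite -[in LHS]mulS_mod -half2 mulnAC mulnC -modnMmr eq_ab modnMmr.
by rewrite -modnMmr eq_ab modnMmr mulnA half2 mulS_mod.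
Qed.

Lemma count_mod_double t q c s : odd t -> q < t ->
  count_mod t q (map (fun x => 2 * x + c) s) = count_mod t ((t.+1./2 * (q + t.-1 * c)) %% t) s.
Proof.
move=> t_odd lt_qt; rewrite /count_mod count_map; apply: eq_count => x /=.
have tc : 2 * x + c + t.-1 * c = c * t + 2 * x.
  by rewrite -[in RHS](@prednK t) ?mulnS; lia.
by rewrite -{1}(modn_small lt_qt) -(eqn_modDr (t.-1 * c)) tc modnMDl eqn_mod_double.
Qed.

Lemma equidistributed_double t c N s :
  odd t -> equidistributed t N s -> equidistributed t N (map (fun x => 2 * x + c) s).
Proof.
move=> t_odd eq_s q lt_qt; rewrite count_mod_double //; apply: eq_s.
by rewrite ltn_mod; case: t t_odd lt_qt.
Qed.

Lemma equidistributed_sub_period t x (s : seq nat) :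
  uniq s -> {subset s <= iota x t} -> equidistributed t (size s) s.
Proof.
move=> uniq_s sub_s q lt_qt.
have le1 : count_mod t q s <= 1.
  rewrite -(count_mod_iota_period x lt_qt) /count_mod -!size_filter.
  apply: uniq_leq_size; first by rewrite filter_uniq.
  by move=> y; rewrite !mem_filter => /andP [-> /sub_s].
case: (ltnP (size s) t) => [lt_st | le_ts].
  have le_size : count_mod t q s <= size s by apply: count_size.
  by case: (count_mod t q s) le1 le_size => [|[|]] //= *; lia.
have [|_ same_s] := uniq_min_size uniq_s sub_s; first by rewrite size_iota.
have perm_s : perm_eq s (iota x t) by apply: uniq_perm; rewrite ?iota_uniq.
rewrite (perm_size perm_s) size_iota.
exact: equidistributed_perm perm_s (@equidistributed_iota t x t) q lt_qt.
Qed.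

Definition balanced_mod m s :=
  forall a b, a < m -> b < m -> count_mod m a s <= (count_mod m b s).+1.

Lemma balanced_mod_perm m (s1 s2 : seq nat) :
  perm_eq s1 s2 -> balanced_mod m s2 -> balanced_mod m s1.
Proof. by move=> s12 bal_s2 a b am bm; rewrite !(count_mod_perm _ _ s12); apply: bal_s2. Qed.

Lemma balanced_mod_catl m f s c :
  (forall a, a < m -> count_mod m a f = c) -> balanced_mod m s -> balanced_mod m (f ++ s).
Proof.
by move=> count_f bal_s a b am bm; rewrite !count_mod_cat !count_f // -addnS leq_add2l bal_s.
Qed.

Lemma mod_mul_add k t h e : e < k -> (k * h + e) %% (k * t) = k * (h %% t) + e.
Proof.
move=> lt_ek; case: (posnP t) => [-> | t_gt0]; first by rewrite !muln0 !modn0.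
rewrite {1}(divn_eq h t) mulnDr mulnA (mulnC k (h %/ t)) -mulnA -addnA modnMDl modn_small //.
apply: (@leq_trans (k * (h %% t).+1)); first by rewrite mulnS addnC ltn_add2r.
by rewrite leq_mul2l ltn_pmod ?orbT.
Qed.

Lemma eqn_mul_add k y e a : e < k -> (k * y + e == a) = (e == a %% k) && (y == a %/ k).
Proof.
move=> lt_ek; have k_gt0 : 0 < k by lia.
apply/eqP/andP => [<- | [/eqP -> /eqP ->]]; last by rewrite mulnC -divn_eq.
by rewrite mulnC modnMDl modn_small // divnMDl // divn_small ?addn0.
Qed.

Lemma count_mod_mul_add k t a e s : e < k ->
  count_mod (k * t) a (map (fun h => k * h + e) s) = (e == a %% k) * count_mod t (a %/ k) s.
Proof.
move=> lt_ek; rewrite /count_mod count_map.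
under eq_count => h do rewrite /= mod_mul_add // eqn_mul_add //.
by case: (e == a %% k); rewrite ?mul1n ?mul0n ?count_pred0.
Qed.

Lemma sumn_indicator (f : nat -> nat) j r :
  sumn [seq (e == j) * f e | e <- r] = count_mem j r * f j.
Proof. by elim: r => //= e r ->; case: eqP => [-> | _]; rewrite ?mul0n ?mulnDl. Qed.

Lemma count_mod_interleave k t a (s : nat -> seq nat) : a < k * t ->
  count_mod (k * t) a (flatten [seq map (fun h => k * h + e) (s e) | e <- iota 0 k]) =
  count_mod t (a %/ k) (s (a %% k)).
Proof.
move=> lt_a; have k_gt0 : 0 < k by case: k lt_a.
rewrite /count_mod count_flatten -map_comp.
rewrite (eq_in_map _ (fun e => (e == a %% k) * count_mod t (a %/ k) (s e)) _).1 => [|e].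
  by rewrite sumn_indicator count_uniq_mem ?iota_uniq // mem_iota ltn_mod k_gt0 mul1n.
by rewrite mem_iota add0n => lt_ek; apply: count_mod_mul_add.
Qed.

Lemma balanced_mod_interleave k t (s : nat -> seq nat) (N : nat -> nat) :
  (forall e, e < k -> equidistributed t (N e) (s e)) ->
  (forall e e', e < k -> e' < k -> N e <= (N e').+1) ->
  balanced_mod (k * t) (flatten [seq map (fun h => k * h + e) (s e) | e <- iota 0 k]).
Proof.
move=> eq_s N_close a b lt_a lt_b; rewrite !count_mod_interleave //.
have /andP [k_gt0 t_gt0] : (0 < k) && (0 < t) by rewrite -muln_gt0 (leq_ltn_trans _ lt_a).
have lt_k e : e %% k < k by rewrite ltn_mod.
have lt_t c : c < k * t -> c %/ k < t by move=> ?; rewrite ltn_divLR // mulnC.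
have [_ bound_a] := eq_s _ (lt_k a) _ (lt_t a lt_a).
have [bound_b _] := eq_s _ (lt_k b) _ (lt_t b lt_b).
have close_ab := N_close _ _ (lt_k a) (lt_k b).
by rewrite mulSn in bound_b; rewrite -ltnS -(ltn_pmul2r t_gt0) !mulSn; lia.
Qed.

(** * Natural number labels and complete blocks *)

Lemma count_mem_Zp_natr m (a : 'Z_m) s : 1 < m ->
  count_mem a (map (fun x => (x%:R)%R : 'Z_m) s) = count_mod m a s.
Proof.
move=> m_gt1; rewrite /count_mod count_map; apply: eq_count => x /=.
by rewrite -val_eqE /= val_Zp_nat.
Qed.

Lemma cordial_of_nat_triangles m (T : seq (nat * nat)) : 1 < m ->
  balanced_mod m (vertex_labels T) -> balanced_mod m (edge_labels T) ->
  is_cordial 'Z_m (friendship_adj (size T)).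
Proof.
move=> m_gt1 balV balE.
pose natZ (x : nat) : 'Z_m := (x%:R)%R.
rewrite -(size_map (fun g => (natZ g.1, natZ g.2)) T).
have lt_m (a : 'Z_m) : a < m by rewrite -[m in _ < m](Zp_cast m_gt1) ltn_ord.
apply: cordial_friendship_labeling => a b.
- have -> : vertex_labels [seq (natZ g.1, natZ g.2) | g <- T] = map natZ (vertex_labels T).
    by rewrite /vertex_labels /= /unzip1 /unzip2 map_cat -!map_comp.
  by rewrite !count_mem_Zp_natr // balV.
- have -> : edge_labels [seq (natZ g.1, natZ g.2) | g <- T] = map natZ (edge_labels T).
    rewrite /edge_labels /unzip1 /unzip2 /pair_sums !map_cat -!map_comp; congr (_ ++ _ ++ _).
    by apply: eq_map => g; rewrite /= /natZ -natrD.
  by rewrite !count_mem_Zp_natr // balE.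
Qed.

Definition diagonal_triangles N : seq (nat * nat) := [seq (x, x) | x <- iota 0 N].

Section DiagonalBlocks.
Variables (m Q : nat).
Hypothesis m_odd : odd m.

Let iota_exact a : a < m -> count_mod m a (iota 0 (Q * m)) = Q.
Proof. exact: (equidistributed_exact (equidistributed_iota _ _)). Qed.

Lemma count_diagonal_vertices a : a < m ->
  count_mod m a (unzip1 (diagonal_triangles (Q * m)) ++ unzip2 (diagonal_triangles (Q * m)))
  = 2 * Q.
Proof.
move=> lt_am; rewrite /unzip1 /unzip2 -!map_comp !map_id_in // count_mod_cat iota_exact //.
by rewrite mul2n addnn.
Qed.

Lemma count_diagonal_edges a : a < m ->
  count_mod m a (edge_labels (diagonal_triangles (Q * m))) = 3 * Q.
Proof.
move=> lt_am; rewrite /edge_labels catA count_mod_cat count_diagonal_vertices //.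
have -> : pair_sums (diagonal_triangles (Q * m)) = map (fun x => 2 * x + 0) (iota 0 (Q * m)).
  by rewrite /pair_sums -map_comp; apply: eq_map => x /=; lia.
have double_iota := equidistributed_double 0 m_odd (equidistributed_iota 0 (Q * m)).
by rewrite (equidistributed_exact double_iota) //; lia.
Qed.

End DiagonalBlocks.

(** * The remaining triangles *)

Lemma map_iota_affine (f : nat -> nat) c k :
  (forall i, i < k -> f i = c + i) -> map f (iota 0 k) = iota c k.
Proof.
by move=> fE; rewrite -[c]addn0 iotaDl; apply/eq_in_map => i; rewrite mem_iota => /fE.
Qed.

Lemma perm_map_iota_rev (f : nat -> nat) c k :
  (forall i, i < k -> f i = c + (k - 1 - i)) -> perm_eq (map f (iota 0 k)) (iota c k).
Proof.
elim: k f => [|k IHk] f fE //.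
have -> : iota c k.+1 = iota c k ++ [:: c + k] by rewrite -addn1 iotaD.
rewrite perm_sym perm_catC /= fE // subn1 subn0 perm_cons perm_sym -[1]/(1 + 0) iotaDl -map_comp.
by apply: IHk => i lt_ik; rewrite /= fE; lia.
Qed.

Definition odd_image (s : seq nat) := map (fun x => 2 * x + 1) s.

Section Ladder.
Variables t a p kd ku : nat.
Hypotheses (le_kd_t : kd <= t) (le_kd_a : 2 * kd <= a).

(** The second components fill [[a - kd, a)] and [[a + p, a + p + ku)], around
    [iota a p]; modulo [t] the sums fill [[a - 2 kd, a - kd)] and
    [[a + p + ku, a + p + 2 ku)]; the first components are [2w + 1] for [w] in
    [[t - kd, t + ku)]. *)
Definition ladder : seq (nat * nat) :=
  [seq (2 * (t - 1 - i) + 1, a - kd + i) | i <- iota 0 kd] ++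
  [seq (2 * (t + i) + 1, a + p + ku - 1 - i) | i <- iota 0 ku].

Lemma ladder_unzip1 : perm_eq (unzip1 ladder) (odd_image (iota (t - kd) (kd + ku))).
Proof.
rewrite /unzip1 map_cat -!map_comp iotaD subnK // /odd_image map_cat.
apply: perm_cat; last by rewrite -(@map_iota_affine (fun i => t + i) t ku) // -map_comp.
rewrite (map_comp (fun x => 2 * x + 1) (fun i => t - 1 - i)) perm_map //.
by apply: perm_map_iota_rev => i lt_ik; lia.
Qed.

Lemma ladder_vertices : perm_eq (iota a p ++ unzip2 ladder) (iota (a - kd) (kd + p + ku)).
Proof.
rewrite /unzip2 map_cat -!map_comp (@map_iota_affine _ (a - kd)) //.
have -> : iota (a - kd) (kd + p + ku) = iota (a - kd) kd ++ iota a p ++ iota (a + p) ku.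
  rewrite !iotaD -catA subnK; last by lia.
  by rewrite (_ : a - kd + (kd + p) = a + p) //; lia.
rewrite perm_catCA !perm_cat2l.
by apply: perm_map_iota_rev => i lt_ik /=; lia.
Qed.

Lemma ladder_edges :
  equidistributed t (2 * kd + p + 2 * ku) (iota a p ++ unzip2 ladder ++ pair_sums ladder).
Proof.
pose target := iota (a - kd) (kd + p + ku) ++ iota (a - 2 * kd) kd ++ iota (a + p + ku) ku.
apply: (@equidistributed_count _ _ _ target) => [q _ | ].
  rewrite catA count_mod_cat (count_mod_perm _ _ ladder_vertices) /target count_mod_cat.
  congr (_ + _); rewrite /pair_sums map_cat -!map_comp !count_mod_cat.
  congr (_ + _).
    rewrite (@count_mod_map_congr _ _ _ (fun i => a - 2 * kd + (kd - 1 - i))) => [|i].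
      by apply: count_mod_perm; apply: perm_map_iota_rev.
    by rewrite mem_iota => lt_ik; rewrite -[in RHS](modnMDl 2); congr (_ %% _); rewrite /=; lia.
  rewrite (@count_mod_map_congr _ _ _ (fun i => a + p + ku + i)) => [|i].
    by rewrite (@map_iota_affine _ (a + p + ku)).
  by rewrite mem_iota => lt_iku; rewrite -[in RHS](modnMDl 2); congr (_ %% _); rewrite /=; lia.
apply: (@equidistributed_perm _ _ _ (iota (a - 2 * kd) (2 * kd + p + 2 * ku))); last first.
  exact: equidistributed_iota.
have -> : 2 * kd + p + 2 * ku = kd + (kd + p + ku) + ku by lia.
rewrite (iotaD _ (kd + _) ku) (iotaD _ kd) -catA perm_catCA.
rewrite (_ : a - 2 * kd + kd = a - kd); last by lia.
by rewrite (_ : a - 2 * kd + (kd + (kd + p + ku)) = a + p + ku); last by lia.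
Qed.

End Ladder.

Lemma count_mod_odd_image_shift t r x n :
  count_mod t r (odd_image (iota (t + x) n)) = count_mod t r (odd_image (iota x n)).
Proof.
rewrite iotaDl /odd_image -map_comp; apply: count_mod_map_congr => y _ /=.
by rewrite mulnDr -addnA modnMDl.
Qed.

Section ResidueClasses.
Variables (P : seq nat) (M1 M2 : seq (nat * nat)).

Definition class_triangles : seq (nat * nat) :=
  [seq (3 * h + 1, 3 * h + 2) | h <- P] ++
  [seq (3 * g.1 + 0, 3 * g.2 + 1) | g <- M1] ++ [seq (3 * g.1 + 0, 3 * g.2 + 2) | g <- M2].

Let lift e (s : seq nat) := map (fun h => 3 * h + e) s.

Lemma unzip1_class_triangles :
  unzip1 class_triangles = lift 1 P ++ lift 0 (unzip1 M1) ++ lift 0 (unzip1 M2).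
Proof. by rewrite /unzip1 /lift !map_cat -!map_comp. Qed.

Lemma unzip2_class_triangles :
  unzip2 class_triangles = lift 2 P ++ lift 1 (unzip2 M1) ++ lift 2 (unzip2 M2).
Proof. by rewrite /unzip2 /lift !map_cat -!map_comp. Qed.

Lemma pair_sums_class_triangles :
  pair_sums class_triangles =
  lift 0 (odd_image P) ++ lift 1 (pair_sums M1) ++ lift 2 (pair_sums M2).
Proof.
rewrite /lift /odd_image /pair_sums !map_cat -!map_comp.
by congr (_ ++ _ ++ _); apply: eq_map => x /=; lia.
Qed.

Lemma perm_vertex_labels_classes :
  perm_eq (vertex_labels class_triangles)
    (flatten [seq lift e (nth [::] [:: 0 :: unzip1 M1 ++ unzip1 M2;
                                       P ++ unzip2 M1; P ++ unzip2 M2] e)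
             | e <- iota 0 3]).
Proof.
rewrite /vertex_labels unzip1_class_triangles unzip2_class_triangles /lift /= !map_cat.
apply/permP => Q; rewrite /= cats0 !count_cat (_ : 3 * 0 + 0 = 0) //.
by change (Q 0%R) with (Q 0); lia.
Qed.

Lemma perm_edge_labels_classes :
  perm_eq (edge_labels class_triangles)
    (flatten [seq lift e (nth [::] [:: unzip1 M1 ++ unzip1 M2 ++ odd_image P;
                                       P ++ unzip2 M1 ++ pair_sums M1;
                                       P ++ unzip2 M2 ++ pair_sums M2] e)
             | e <- iota 0 3]).
Proof.
rewrite /edge_labels unzip1_class_triangles unzip2_class_triangles pair_sums_class_triangles.
by rewrite /lift /= !map_cat cats0; apply/permP => Q; rewrite /= !count_cat; lia.
Qed.

End ResidueClasses.

Section Remainder.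
Variables (t p q k1d k1u k2d k2u : nat).
Hypotheses (t_odd : odd t) (p_near_q : q <= p <= q.+2).
Hypotheses (k1_sum : k1d + k1u = q) (k2_sum : k2d + k2u = q).
Hypotheses (k_full : (k1d + k2u == 0) || (k1d + k2u == t)).
Hypotheses (k2d_small : 2 * k2d < t) (k1u_small : 2 * k1u < t).

(** The first components of the lower part of [L2] and of the upper part of
    [L1] are [2w + 1] for [w] in [[t - k2d, t + k1u)]; as [a = t + k1u] modulo
    [t], the rim labels [2h + 1] of the triangles [(3h + 1, 3h + 2)] continue
    this interval.  The other first components form
    [odd_image (iota (t - k1d) (k1d + k2u))], empty or a complete residue
    system.  The summand [2 * t] keeps the truncated subtractions [a - 2 * kd]
    exact. *)
Let a := 2 * t + k1u.
Let L1 := ladder t a p k1d k1u.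
Let L2 := ladder t a p k2d k2u.

Definition remainder_triangles := class_triangles (iota a p) L1 L2.

Lemma size_remainder_triangles : size remainder_triangles = 2 * q + p.
Proof. by rewrite !size_cat !size_map /L1 /L2 !size_cat !size_map !size_iota; lia. Qed.

Let k1d_le : k1d <= t. Proof. by case/orP: k_full => /eqP; lia. Qed.
Let k2d_le : k2d <= t. Proof. by lia. Qed.
Let k1d_le_a : 2 * k1d <= a. Proof. by rewrite /a; lia. Qed.
Let k2d_le_a : 2 * k2d <= a. Proof. by rewrite /a; lia. Qed.

Lemma equidistributed_cat_full N s :
  equidistributed t N s ->
  equidistributed t (N + (k1d + k2u)) (s ++ odd_image (iota (t - k1d) (k1d + k2u))).
Proof.
case/orP: k_full => /eqP ->; first by rewrite addn0 cats0.
move=> eq_s; apply: equidistributed_cat_period => //.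
by apply: equidistributed_double; last exact: equidistributed_iota.
Qed.

Lemma perm_ladders_unzip1 :
  perm_eq (unzip1 L1 ++ unzip1 L2)
          (odd_image (iota (t - k2d) (k2d + k1u)) ++ odd_image (iota (t - k1d) (k1d + k2u))).
Proof.
have perm1 : perm_eq (unzip1 L1) (odd_image (iota (t - k1d) (k1d + k1u))).
  by apply: ladder_unzip1; lia.
have perm2 : perm_eq (unzip1 L2) (odd_image (iota (t - k2d) (k2d + k2u))).
  by apply: ladder_unzip1; lia.
apply: perm_trans (perm_cat perm1 perm2) _.
rewrite /odd_image !iotaD !subnK // !map_cat.
by apply/permP => P; rewrite !count_cat; lia.
Qed.

Let half_t : 2 * t./2 + 1 = t.
Proof. by rewrite -[in RHS](odd_double_half t) t_odd mul2n addnC. Qed.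

Lemma equidistributed_class0_vertices : equidistributed t (2 * q + 1) (0 :: unzip1 L1 ++ unzip1 L2).
Proof.
set W := iota (t - k2d) (k2d + k1u).
apply: (@equidistributed_perm _ _ _ ((0 :: odd_image W) ++ odd_image (iota (t - k1d) (k1d + k2u)))).
  by rewrite /= perm_cons perm_ladders_unzip1.
rewrite (_ : 2 * q + 1 = (k2d + k1u).+1 + (k1d + k2u)); last by lia.
apply: equidistributed_cat_full.
apply: (@equidistributed_count _ _ _ (odd_image (t./2 :: W))) => [r _ | ].
  by rewrite /odd_image /= half_t /count_mod /= mod0n modnn.
apply: equidistributed_double => //.
have -> : (k2d + k1u).+1 = size (t./2 :: W) by rewrite /= size_iota.
apply: (@equidistributed_sub_period _ t./2).
  by rewrite /= iota_uniq andbT mem_iota; lia.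
by move=> y; rewrite inE !mem_iota => /orP [/eqP -> | ]; lia.
Qed.

Lemma equidistributed_class0_edges :
  equidistributed t (2 * q + p) (unzip1 L1 ++ unzip1 L2 ++ odd_image (iota a p)).
Proof.
set F := odd_image (iota (t - k1d) (k1d + k2u)).
apply: (@equidistributed_count _ _ _ (odd_image (iota (t - k2d) (k2d + k1u + p)) ++ F)) => [r _ | ].
  rewrite catA count_mod_cat (count_mod_perm _ _ perm_ladders_unzip1) !count_mod_cat.
  rewrite [iota (t - k2d) (_ + p)]iotaD (_ : t - k2d + (k2d + k1u) = t + k1u); last by lia.
  rewrite /odd_image map_cat count_mod_cat -!/(odd_image _).
  by rewrite /a /F (_ : 2 * t + k1u = t + (t + k1u)) ?count_mod_odd_image_shift; lia.
rewrite (_ : 2 * q + p = k2d + k1u + p + (k1d + k2u)); last by lia.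
by apply: equidistributed_cat_full; apply: equidistributed_double; last exact: equidistributed_iota.
Qed.

Lemma balanced_remainder_vertices : balanced_mod (3 * t) (vertex_labels remainder_triangles).
Proof.
apply: balanced_mod_perm (perm_vertex_labels_classes _ _ _) _.
apply: (@balanced_mod_interleave _ _ _ (nth 0 [:: 2 * q + 1; q + p; q + p])) => [e | e e'].
  case: e => [|[|[|//]]] _ /=; first exact: equidistributed_class0_vertices.
    rewrite -k1_sum addnAC.
    exact: equidistributed_perm (ladder_vertices p k1u k1d_le k1d_le_a) (equidistributed_iota _ _).
  rewrite -k2_sum addnAC.
  exact: equidistributed_perm (ladder_vertices p k2u k2d_le k2d_le_a) (equidistributed_iota _ _).
by case: e e' => [|[|[|//]]] [|[|[|//]]] //= _ _; lia.
Qed.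

Lemma balanced_remainder_edges : balanced_mod (3 * t) (edge_labels remainder_triangles).
Proof.
apply: balanced_mod_perm (perm_edge_labels_classes _ _ _) _.
apply: (@balanced_mod_interleave _ _ _ (fun=> 2 * q + p)) => [e | //].
case: e => [|[|[|//]]] _ /=; first exact: equidistributed_class0_edges.
  rewrite (_ : 2 * q + p = 2 * k1d + p + 2 * k1u); last by lia.
  exact: ladder_edges.
rewrite (_ : 2 * q + p = 2 * k2d + p + 2 * k2u); last by lia.
exact: ladder_edges.
Qed.

End Remainder.

Lemma ladder_parameters t q : odd t -> q < t ->
  exists k1d k1u k2d k2u, [/\ k1d + k1u = q, k2d + k2u = q,
    (k1d + k2u == 0) || (k1d + k2u == t), 2 * k2d < t & 2 * k1u < t].
Proof.
move=> t_odd lt_qt; have t_half := odd_double_half t; rewrite t_odd -mul2n in t_half.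
case: (ltnP (2 * q) t) => [small | large].
  by exists 0, q, q, 0; split; lia.
by exists t./2.+1, (q - t./2.+1), (q - t./2), t./2; split; lia.
Qed.

Lemma exists_balanced_remainder t r : odd t -> r < 3 * t ->
  exists T : seq (nat * nat),
    [/\ size T = r, balanced_mod (3 * t) (vertex_labels T) & balanced_mod (3 * t) (edge_labels T)].
Proof.
move=> t_odd lt_r; set q := r %/ 3; set p := r - 2 * q.
have r_split : r = 3 * q + r %% 3 by rewrite /q mulnC -divn_eq.
have lt_r3 : r %% 3 < 3 by rewrite ltn_mod.
have lt_qt : q < t by rewrite /q ltn_divLR // mulnC.
have [k1d [k1u [k2d [k2u [k1 k2 kf k2d_small k1u_small]]]]] := ladder_parameters t_odd lt_qt.
have p_near_q : q <= p <= q.+2 by lia.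
exists (remainder_triangles t p k1d k1u k2d k2u); split.
- by rewrite (size_remainder_triangles _ _ k1 k2); lia.
- by apply: (@balanced_remainder_vertices t p q).
- by apply: (@balanced_remainder_edges t p q).
Qed.

Theorem corollary12p3 (m : nat) (hm1 : (1 <= m)%N) (hodd : odd m) (h3 : (3 %| m)%N) :
  forall n : nat, is_cordial 'Z_m (friendship_adj n).
Proof.
move=> n; set t := m %/ 3.
have m_3t : m = 3 * t by rewrite /t mulnC divnK.
have t_odd : odd t by move: hodd; rewrite m_3t oddM => /andP [].
have m_gt1 : 1 < m by rewrite m_3t; case: (t) t_odd => // t' _; lia.
have lt_r : n %% m < 3 * t by rewrite -m_3t ltn_mod; lia.
have [R [size_R balV_R balE_R]] := exists_balanced_remainder t_odd lt_r.
set D := diagonal_triangles (n %/ m * m).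
have -> : n = size (D ++ R) by rewrite size_cat size_map size_iota size_R -divn_eq.
apply: cordial_of_nat_triangles => //.
  apply: balanced_mod_perm (perm_vertex_labels_cat _ _) _.
  by apply: (balanced_mod_catl (@count_diagonal_vertices m (n %/ m))); rewrite m_3t.
apply: balanced_mod_perm (perm_edge_labels_cat _ _) _.
by apply: (balanced_mod_catl (@count_diagonal_edges m (n %/ m) hodd)); rewrite m_3t.
Qed.
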